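(* For every positive integer $n$ there is a number $M$ such that for every prime $p>M$, the number $np$ satisfies Condition 1 with $p$ and another prime; that is, there is a prime $q\ne p$ such that for every integer $k$ with $1\le k\le np-1$, $\binom{np}{k}$ is divisible by $p$ or by $q$.
   Context: A positive integer $N$ satisfies Condition 1 with primes $p$ and $q$ if for all integers $k$ with $1\le k\le N-1$ the binomial coefficient $\binom{N}{k}$ is divisible by at least one of $p$ or $q$. *)

From mathcomp Require Import all_boot.

Definition condition1 (N p q : nat) : Prop :=
  forall k : nat, 1 <= k -> k <= N - 1 -> (p %| 'C(N, k)) || (q %| 'C(N, k)).

From mathcomp Require Import all_boot zify.

(* Since p > n!, the number p + 1 has a prime-power part q^e > n (otherwise all its
   prime-power parts, hence p + 1 itself, would divide n!).  Then for 0 < k < np: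
   if p does not divide k, then p | C(np, k) because k C(np, k) = np C(np - 1, k - 1);
   if k = jp with 0 < j < n, then p = -1 mod q^e and j, n - j < q^e make the
   subtraction np - jp borrow at the digit of weight q^e, so q | C(np, jp) by Legendre. *)

Lemma dvdn_bin_coprime d N k : d %| N -> coprime d k -> d %| 'C(N, k).
Proof.
case: k => [|k] dN; first by rewrite /coprime gcdn0 => /eqP->.
by move=> cop; rewrite -(Gauss_dvdr _ cop) -mul_bin_diag dvdn_mulr.
Qed.

Lemma logn_fact_widen q m B : prime q -> m < B ->
  logn q m`! = \sum_(1 <= i < B) m %/ q ^ i.
Proof.
move=> q_pr ltmB; rewrite logn_fact // [RHS](big_cat_nat _ (n := m.+1)) //=.
rewrite [X in _ = _ + X]big1_seq ?addn0 // => i.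
rewrite mem_index_iota => /andP[_ /andP[lemi _]].
by rewrite divn_small // (leq_trans lemi) // ltnW // ltn_expl // prime_gt1.
Qed.

(* Legendre's formula: each power q^i contributes the carry
   N/q^i - k/q^i - (N-k)/q^i >= 0 to the q-adic valuation of C(N, k). *)
Lemma dvdn_bin_of_carry q N k i : prime q -> k <= N ->
  k %/ q ^ i + (N - k) %/ q ^ i < N %/ q ^ i -> q %| 'C(N, k).
Proof.
move=> q_pr leKN carry.
have i_gt0 : 0 < i by case: i carry => //; rewrite expn0 !divn1 subnKC // ltnn.
have leiN : i <= N.
  rewrite leqNgt; apply: contraL carry => ltNi.
  by rewrite [N %/ _]divn_small ?ltn0 // (ltn_trans ltNi) // ltn_expl // prime_gt1.
have i_in : i \in index_iota 1 N.+1 by rewrite mem_index_iota i_gt0 ltnS.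
have legendre : logn q N`! = logn q 'C(N, k) + (logn q k`! + logn q (N - k)`!).
  by rewrite -(bin_fact leKN) !lognM ?muln_gt0 ?fact_gt0 ?bin_gt0.
move: legendre; rewrite !(@logn_fact_widen q _ N.+1 q_pr) ?ltnS ?leq_subr // -big_split /=.
rewrite !(bigD1_seq i i_in (iota_uniq _ _)) /=.
have le_rest : \sum_(j <- index_iota 1 N.+1 | j != i) (k %/ q ^ j + (N - k) %/ q ^ j)
    <= \sum_(j <- index_iota 1 N.+1 | j != i) N %/ q ^ j.
  apply: leq_sum => j _.
  by rewrite -[X in _ <= X %/ _](subnKC leKN) divnD ?expn_gt0 ?prime_gt0 // leq_addr.
move=> legendre; have : 0 < logn q 'C(N, k) by lia.
by rewrite logn_gt0 mem_primes => /and3P[].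
Qed.

Lemma divn_mul_pred y p j : y %| p.+1 -> 0 < j <= y ->
  (j * p) %/ y = (j * (p.+1 %/ y)).-1.
Proof.
move=> /dvdnP[c Ec] /andP[j_gt0 lejy].
have y_gt0 : 0 < y := leq_trans j_gt0 lejy.
rewrite Ec mulnK //.
have c_gt0 : 0 < c by case: c Ec.
have -> : j * p = (j * c).-1 * y + (y - j).
  have : j * p.+1 = j * c * y by rewrite Ec mulnA.
  have : y <= j * c * y by rewrite leq_pmull // muln_gt0 j_gt0.
  rewrite -subn1 mulnBl mul1n mulnS; lia.
by rewrite divnMDl // divn_small ?addn0 //; lia.
Qed.

Lemma prime_dvd_bin_mul q e p n j : prime q -> q ^ e %| p.+1 -> n <= q ^ e ->
  0 < j < n -> q %| 'C(n * p, j * p).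
Proof.
move=> q_pr dvd_qe len /andP[j_gt0 ltjn].
apply: (@dvdn_bin_of_carry q _ _ e q_pr); first by rewrite leq_mul2r ltnW ?orbT.
have c_gt0 : 0 < p.+1 %/ q ^ e.
  by rewrite divn_gt0 ?expn_gt0 ?prime_gt0 //; apply: dvdn_leq.
have n_gt0 : 0 < n := ltn_trans j_gt0 ltjn.
have lejq : j <= q ^ e := leq_trans (ltnW ltjn) len.
have le_njq : n - j <= q ^ e := leq_trans (leq_subr j n) len.
rewrite -mulnBl !divn_mul_pred ?n_gt0 ?j_gt0 ?subn_gt0 ?ltjn //.
rewrite -[in X in _ < X](subnKC (ltnW ltjn)) mulnDl; set c := p.+1 %/ q ^ e.
have : 0 < j * c by rewrite muln_gt0 j_gt0.
have : 0 < (n - j) * c by rewrite muln_gt0 subn_gt0 ltjn.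
lia.
Qed.

Lemma exists_prime_part_gt n m : n`! < m ->
  exists2 q, q \in primes m & n < m`_q.
Proof.
move=> ltm; have m_gt0 : 0 < m := leq_ltn_trans (leq0n _) ltm.
apply/hasP; apply: contraLR ltm => /hasPn small_parts.
rewrite -leqNgt dvdn_leq ?fact_gt0 //; apply/dvdn_partP => // q q_in.
by apply: dvdn_fact; rewrite part_gt0 leqNgt small_parts.
Qed.

Theorem mainTheorem2 :
  forall n : nat, 0 < n ->
  exists M : nat, forall p : nat, prime p -> M < p ->
    exists q : nat, [/\ prime q, q != p & condition1 (n * p) p q].
Proof.
move=> n _; exists n`! => p p_pr ltnp.
have [q] := @exists_prime_part_gt n p.+1 (ltnW ltnp).
rewrite mem_primes p_part => /and3P[q_pr _ q_dvd] lt_part.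
exists q; split => //.
  apply: contraTneq q_dvd => ->.
  by rewrite -addn1 dvdn_addr // dvdn1 neq_ltn prime_gt1 ?orbT.
move=> k k_gt0 ltk; apply/orP.
case: (boolP (p %| k)) => [/dvdnP[j def_k] | ndvd_pk].
  right; rewrite def_k.
  apply: (@prime_dvd_bin_mul q _ p n j q_pr (pfactor_dvdnn _ _) (ltnW lt_part)).
  by move: k_gt0 ltk; rewrite def_k; nia.
by left; rewrite dvdn_bin_coprime ?dvdn_mull // prime_coprime.
Qed.
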